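(* Let $(X,o,\mu)$ be a boundedly-compact pmm space. (i) The curve $t\mapsto\overline B_t(o)$, $t\ge0$, is càdlàg with respect to the Hausdorff metric on closed subsets of $X$, and its left limit at $t=r>0$ is the closure of $B_r(o)$. (ii) The curve $t\mapsto\mu|_{\overline B_t(o)}$ is càdlàg with respect to the Prokhorov metric, and its left limit at $t=r>0$ is $\mu|_{B_r(o)}$.
   Context: A pmm space is $(X,o,\mu)$ with $X$ a metric space, $o\in X$, $\mu$ a nonnegative Borel measure; it is boundedly compact if every closed ball $\overline B_r(x)=\{y:d(x,y)\le r\}$ is compact and has finite $\mu$-measure. Open ball $B_r(x)=\{y:d(x,y)<r\}$. Hausdorff distance: $d_H(A,B)=\inf\{\epsilon\ge0:A\subseteq B^\epsilon,B\subseteq A^\epsilon\}$, $A^\epsilon=\{z:\exists a\in A, d(z,a)\le\epsilon\}$. Prokhorov distance: $d_P(\mu,\nu)=\inf\{\epsilon>0:\mu(A)\le\nu(A^\epsilon)+\epsilon,\ \nu(A)\le\mu(A^\epsilon)+\epsilon\ \forall A\text{ closed}\}$. *)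

From mathcomp Require Import all_boot all_order all_algebra.
From mathcomp Require Import all_classical all_reals all_analysis.
Set Implicit Arguments. Unset Strict Implicit. Unset Printing Implicit Defensive.
Import Order.TTheory GRing.Theory Num.Theory.
Local Open Scope classical_set_scope.
Local Open Scope ring_scope.

Section MetricDefs.
Context {R : realType} {X : Type} (d : X -> X -> R).

Definition is_metric : Prop :=
  (forall x y, 0 <= d x y) /\
  (forall x y, d x y = 0 <-> x = y) /\
  (forall x y, d x y = d y x) /\
  (forall x y z, d x z <= d x y + d y z).

Definition oball (x : X) (r : R) : set X := [set y | d x y < r].
Definition cball (x : X) (r : R) : set X := [set y | d x y <= r].

Definition dopen (U : set X) : Prop :=
  forall x, U x -> exists2 e : R, 0 < e & oball x e `<=` U.

Definition dclosure (A : set X) : set X :=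
  [set x | forall e : R, 0 < e -> exists2 a, A a & d x a < e].

Definition dclosed (A : set X) : Prop := dclosure A `<=` A.

Definition dcompact (K : set X) : Prop :=
  forall (I : Type) (U : I -> set X), (forall i, dopen (U i)) ->
    K `<=` \bigcup_i U i ->
    exists F : set I, finite_set F /\ K `<=` \bigcup_(i in F) U i.

Definition thick (A : set X) (e : R) : set X :=
  [set z | exists2 a, A a & d z a <= e].

(* Hausdorff distance (extended-real valued; +oo if no admissible eps) *)
Definition hausdorff_dist (A B : set X) : \bar R :=
  ereal_inf [set e%:E | e in
    [set e : R | 0 <= e /\ A `<=` thick B e /\ B `<=` thick A e]].

Definition prokhorov_dist (mu nu : set X -> \bar R) : \bar R :=
  ereal_inf [set e%:E | e in
    [set e : R | 0 < e /\ forall A, dclosed A ->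
        (mu A <= nu (thick A e) + e%:E)%E /\ (nu A <= mu (thick A e) + e%:E)%E]].

End MetricDefs.

Definition restr {X : Type} {R : realType} (mu : set X -> \bar R) (S : set X)
  : set X -> \bar R := fun A => mu (A `&` S).

From mathcomp Require Import all_boot all_order all_algebra.
From mathcomp Require Import all_classical all_reals all_analysis.
From mathcomp Require Import lra.
Import Order.TTheory GRing.Theory Num.Theory.
Local Open Scope classical_set_scope.
Local Open Scope ring_scope.

(** The key fact: in a boundedly compact space, an open set V containing a closed
ball B_c(z) contains some larger ball B_(c+delta)(z), since the increasing open sets
V `|` [set x | c + 1/(n+1) < d z x] cover the compact ball B_(c+1)(z).  With V the
open eps-thickening of B_t(o) this is right continuity in the Hausdorff metric; the
left limit at r follows from the same covering argument on B_r(o), which contains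
the closure of the open ball.  With V the complement of a closed set A it shows
that the closed thickenings of A are closed, hence Borel, so that mu can compare
them.  Finally the Prokhorov distance between the restrictions of mu to nested sets
is at most the mass of their difference, and the mass of the shells tends to 0 by
continuity of mu from above. *)

Lemma le_natSinv (R : realFieldType) {n m : nat} :
  (n <= m)%N -> m.+1%:R^-1 <= n.+1%:R^-1 :> R.
Proof. by move=> nm; rewrite lef_pV2 ?posrE ?ltr0Sn // ler_nat ltnS. Qed.

Lemma natSinv_le1 (R : realFieldType) (n : nat) : n.+1%:R^-1 <= 1 :> R.
Proof. by rewrite invf_le1 ?ltr0Sn // ler1n. Qed.

Section MetricSpace.
Context {R : realType} {X : Type} {d : X -> X -> R}.
Hypothesis hd : is_metric d.

Lemma metric_xx x : d x x = 0.
Proof. by case: hd => _ [h _]; apply/h. Qed.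

Lemma metricC x y : d x y = d y x.
Proof. by case: hd => _ [_ [h _]]. Qed.

Lemma metric_triangle x y z : d x z <= d x y + d y z.
Proof. by case: hd => _ [_ [_ h]]. Qed.

Definition othick (A : set X) (e : R) : set X := [set z | exists2 a, A a & d z a < e].

Lemma othick_sub_thick A e : othick A e `<=` thick d A e.
Proof. by move=> z [a Aa za]; exists a => //; apply: ltW. Qed.

Lemma sub_othick A e : 0 < e -> A `<=` othick A e.
Proof. by move=> e0 x Ax; exists x; rewrite ?metric_xx. Qed.

Lemma sub_dclosure (A : set X) : A `<=` dclosure d A.
Proof. by move=> x Ax e e0; exists x; rewrite ?metric_xx. Qed.

Lemma dclosed_cball z c : dclosed d (cball d z c).
Proof.
move=> x xcl; apply/ler_addgt0Pr => e e0.
have [a za xa] := xcl e e0; move: za; rewrite /cball /= => za.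
have := metric_triangle z a x; rewrite (metricC a x); lra.
Qed.

Lemma dclosure_oball_sub z c : dclosure d (oball d z c) `<=` cball d z c.
Proof.
move=> x xcl; apply: dclosed_cball => e /xcl [a za xa]; exists a => //.
exact: ltW.
Qed.

Lemma dopen_setU (A B : set X) : dopen d A -> dopen d B -> dopen d (A `|` B).
Proof.
by move=> oA oB x [/oA [e e0 h]|/oB [e e0 h]]; exists e => // y /h; [left|right].
Qed.

Lemma dopen_metric_gt z c : dopen d [set x | c < d z x].
Proof.
move=> x /= cx; exists (d z x - c); first by rewrite subr_gt0.
move=> y; rewrite /oball /= => xy.
have := metric_triangle z y x; rewrite (metricC y x); lra.
Qed.

Lemma dopen_oball z c : dopen d (oball d z c).
Proof.
move=> x; rewrite /oball /= => zx; exists (c - d z x); first by rewrite subr_gt0.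
move=> y; rewrite /oball /= => xy.
have := metric_triangle z x y; lra.
Qed.

Lemma dopen_othick A e : dopen d (othick A e).
Proof.
move=> x [a Aa xa]; exists (e - d x a); first by rewrite subr_gt0.
move=> y; rewrite /oball /= => xy; exists a => //.
have := metric_triangle y x a; rewrite (metricC y x); lra.
Qed.

Lemma dopen_setC_dclosure (A : set X) : dopen d (~` dclosure d A).
Proof.
move=> x /existsNP [e /not_implyP [e0 far]].
exists (e / 2); first by rewrite divr_gt0.
move=> y; rewrite /oball /= => xy ycl.
have [a Aa ya] := ycl (e / 2) (divr_gt0 e0 (ltr0Sn _ 1)).
by apply: far; exists a => //; have := metric_triangle x y a; lra.
Qed.

Lemma dclosed_openC (A : set X) : dclosed d A -> dopen d (~` A).
Proof.
move=> cA; suff -> : ~` A = ~` dclosure d A by exact: dopen_setC_dclosure.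
by apply/seteqP; split=> x /= nAx Ax; apply: nAx; [apply: cA|apply: sub_dclosure].
Qed.

Lemma dcompact_increasing_cover (K : set X) (U : nat -> set X) : dcompact d K ->
  (forall n, dopen d (U n)) -> (forall n m, (n <= m)%N -> U n `<=` U m) ->
  K `<=` \bigcup_n U n -> exists N, K `<=` U N.
Proof.
move=> cK oU homU KU; have [F [fF KF]] := cK nat U oU KU.
have [S FS] := finite_fsetP.1 fF.
exists (\max_(i <- finmap.enum_fset S) i)%N => x /KF [i Fi Uix].
apply: (homU i) => //; rewrite FS /= in Fi.
exact: (@leq_bigmax_seq _ _ xpredT id i Fi isT).
Qed.

Lemma hausdorff_dist_le (A B : set X) e : 0 <= e ->
  A `<=` thick d B e -> B `<=` thick d A e -> (hausdorff_dist d A B <= e%:E)%E.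
Proof. by move=> e0 AB BA; apply: ereal_inf_lbound; exists e. Qed.

Lemma prokhorov_dist_le (mu nu : set X -> \bar R) e : 0 < e ->
  (forall A, dclosed d A -> (mu A <= nu (thick d A e) + e%:E)%E /\
                            (nu A <= mu (thick d A e) + e%:E)%E) ->
  (prokhorov_dist d mu nu <= e%:E)%E.
Proof. by move=> e0 h; apply: ereal_inf_lbound; exists e. Qed.

Lemma prokhorov_distC (mu nu : set X -> \bar R) :
  prokhorov_dist d mu nu = prokhorov_dist d nu mu.
Proof.
rewrite /prokhorov_dist; congr ereal_inf; congr image.
by apply/seteqP; split=> e [e0 h]; split=> // A /h [].
Qed.

Section BoundedlyCompact.
Hypothesis cball_compact : forall x r, dcompact d (cball d x r).

Lemma cball_margin (V : set X) z c : dopen d V -> cball d z c `<=` V ->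
  exists2 delta, 0 < delta & cball d z (c + delta) `<=` V.
Proof.
move=> oV zcV; pose U n := V `|` [set x | c + n.+1%:R^-1 < d z x].
have [N KU] : exists N, cball d z (c + 1) `<=` U N.
  apply: (dcompact_increasing_cover _ U (cball_compact z (c + 1))) => [n|n m nm x|x _].
  - exact/dopen_setU/dopen_metric_gt.
  - case=> [Vx|/= zx]; [by left|right => /=].
    by apply: le_lt_trans zx; rewrite lerD2l le_natSinv.
  - have [Vx|nVx] := pselect (V x); first by exists 0%N => //; left.
    have /ltr_add_invr [n zx] : c < d z x.
      by rewrite ltNge; apply/negP => zx; apply/nVx/zcV.
    by exists n => //; right.
exists N.+1%:R^-1 => // x zx.
have /KU [//|/= zx'] : cball d z (c + 1) x.
  by rewrite /cball /= in zx *; apply: le_trans zx _; rewrite lerD2l natSinv_le1.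
by move: zx; rewrite /cball /= leNgt zx'.
Qed.

Lemma dclosed_thick (A : set X) e : dclosed d A -> dclosed d (thick d A e).
Proof.
move=> cA z zcl; apply: contrapT => zA.
have [delta delta0 far] : exists2 delta, 0 < delta & cball d z (e + delta) `<=` ~` A.
  apply: cball_margin; first exact: dclosed_openC.
  by move=> a za Aa; apply: zA; exists a.
have [y [a Aa ya] zy] := zcl delta delta0.
by apply: (far a) => //; rewrite /cball /=; have := metric_triangle z y a; lra.
Qed.

Lemma hausdorff_cball_right o t eps : 0 < eps ->
  exists2 delta, 0 < delta & forall s, t <= s < t + delta ->
    (hausdorff_dist d (cball d o s) (cball d o t) <= eps%:E)%E.
Proof.
move=> eps0; have [delta delta0 tV] : exists2 delta, 0 < delta &
    cball d o (t + delta) `<=` othick (cball d o t) eps.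
  by apply: cball_margin; [exact: dopen_othick|exact: sub_othick].
exists delta => // s /andP [ts sdelta]; apply: hausdorff_dist_le; first exact: ltW.
- move=> x ox; apply/othick_sub_thick/tV; rewrite /cball /= in ox *; lra.
- move=> x ox; apply/othick_sub_thick/sub_othick => //.
  by rewrite /cball /= in ox *; lra.
Qed.

Lemma hausdorff_cball_left o r eps : 0 < eps ->
  exists2 delta, 0 < delta & forall s, r - delta < s < r ->
    (hausdorff_dist d (cball d o s) (dclosure d (oball d o r)) <= eps%:E)%E.
Proof.
move=> eps0; pose U n := ~` dclosure d (oball d o r) `|`
                         othick (oball d o (r - n.+1%:R^-1)) eps.
have [N KU] : exists N, cball d o r `<=` U N.
  apply: (dcompact_increasing_cover _ U (cball_compact o r)) => [n|n m nm x|x _].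
  - exact/dopen_setU/dopen_othick/dopen_setC_dclosure.
  - case=> [xcl|[a oa xa]]; [by left|right; exists a => //].
    by rewrite /oball /= in oa *; apply: lt_le_trans oa _; rewrite lerD2l lerN2 le_natSinv.
  - have [xcl|] := pselect (dclosure d (oball d o r) x); last by exists 0%N => //; left.
    have [a /ltr_add_invr [n oa] xa] := xcl eps eps0.
    by exists n => //; right; exists a => //; rewrite /oball /= ltrBrDr.
exists N.+1%:R^-1 => // s /andP [rs sr].
apply: hausdorff_dist_le; first exact: ltW.
- move=> x ox; apply/othick_sub_thick/sub_othick/sub_dclosure => //.
  by rewrite /oball /cball /= in ox *; lra.
- move=> x xcl; case: (KU x (dclosure_oball_sub o r x xcl)) => [//|[a oa xa]].
  by exists a; [rewrite /oball /cball /= in oa *; apply/ltW/(lt_trans oa)|exact: ltW].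
Qed.

End BoundedlyCompact.
End MetricSpace.

Section MeasureOnMetricSpace.
Context {R : realType} {disp : measure_display} {X : measurableType disp}.
Context {d : X -> X -> R} (mu : {measure set X -> \bar R}).
Hypothesis hd : is_metric d.
Hypothesis hBorel : (@measurable disp X) = <<s dopen d >>.
Hypothesis cball_compact : forall x r, dcompact d (cball d x r).
Hypothesis cball_finite : forall x r, (mu (cball d x r) < +oo)%E.

Lemma dopen_measurable U : dopen d U -> measurable U.
Proof. by rewrite hBorel; apply: sub_sigma_algebra. Qed.

Lemma dclosed_measurable A : dclosed d A -> measurable A.
Proof.
by move=> cA; rewrite -(setCK A); apply/measurableC/dopen_measurable/dclosed_openC.
Qed.

Lemma measure_nonincreasing_set0_lt (F : nat -> set X) :
  (forall n, measurable (F n)) -> (forall n m, (n <= m)%N -> F m `<=` F n) ->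
  (mu (F 0%N) < +oo)%E -> \bigcap_n F n = set0 ->
  forall e, 0 < e -> exists N, (mu (F N) < e%:E)%E.
Proof.
move=> mF homF F0fin F0 e e0.
have : mu \o F @ \oo --> mu (\bigcap_n F n).
  apply: nonincreasing_cvg_mu => //; first by rewrite F0.
  by move=> n m nm; apply/subsetPset/homF.
rewrite F0 measure0 => /(_ _ (@nbhs_open_ereal_lt R 0 (fun=> e) e0)) [N _ FN].
by exists N; apply: (FN N) => /=.
Qed.

Lemma prokhorov_restr_subset (S T : set X) e : 0 < e -> measurable S -> measurable T ->
  T `<=` S -> (mu (S `\` T) <= e%:E)%E ->
  (prokhorov_dist d (restr mu S) (restr mu T) <= e%:E)%E.
Proof.
move=> e0 mS mT TS muST; apply: prokhorov_dist_le => // A cA; rewrite /restr.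
have mA := dclosed_measurable A cA.
have mAe := dclosed_measurable _ (dclosed_thick hd cball_compact A e cA).
have A_thick : A `<=` thick d A e.
  by move=> x Ax; exists x => //; rewrite (metric_xx hd) ltW.
split.
- apply: (@le_trans _ _ (mu ((thick d A e `&` T) `|` (S `\` T)))).
    apply: le_measure; rewrite ?inE.
    + exact: measurableI.
    + by apply: measurableU; [exact: measurableI|exact: measurableD].
    + move=> x [Ax Sx]; have [Tx|] := pselect (T x); last by right.
      by left; split=> //; apply: A_thick.
  apply: (le_trans (measureU2 _ _ _)); [exact: measurableI|exact: measurableD|].
  exact: leeD.
- apply: (@le_trans _ _ (mu (thick d A e `&` S))); last by rewrite leeDl ?lee_fin ?ltW.
  apply: le_measure; rewrite ?inE; [exact: measurableI|exact: measurableI|].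
  by move=> x [/A_thick ? /TS].
Qed.

Lemma prokhorov_cball_right o t eps : 0 < eps ->
  exists2 delta, 0 < delta & forall s, t <= s < t + delta ->
    (prokhorov_dist d (restr mu (cball d o s)) (restr mu (cball d o t)) <= eps%:E)%E.
Proof.
move=> eps0; pose F n := cball d o (t + n.+1%:R^-1) `\` cball d o t.
have mcball x c : measurable (cball d x c) by exact/dclosed_measurable/dclosed_cball.
have [N muFN] : exists N, (mu (F N) < eps%:E)%E.
  apply: measure_nonincreasing_set0_lt => // [n|n m nm x [ox tx]||].
  - exact: measurableD.
  - by split=> //; apply: le_trans ox _; rewrite lerD2l le_natSinv.
  - apply: le_lt_trans (cball_finite o (t + 1%:R^-1)).
    by apply: le_measure; rewrite ?inE //; [exact: measurableD|move=> x []].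
  - apply/seteqP; split=> // x Fx; have [_ /negP] := Fx 0%N I.
    rewrite /cball /= -ltNge => /ltr_add_invr [n tx].
    by have [] := Fx n I; rewrite /cball /= leNgt tx.
exists N.+1%:R^-1 => // s /andP [ts sN].
apply: prokhorov_restr_subset => //; first by move=> x /le_trans; apply.
apply: le_trans (ltW muFN); apply: le_measure; rewrite ?inE; do ?exact: measurableD.
by move=> x [ox tx]; split=> //; apply/(le_trans ox)/ltW.
Qed.

Lemma prokhorov_cball_left o r eps : 0 < eps ->
  exists2 delta, 0 < delta & forall s, r - delta < s < r ->
    (prokhorov_dist d (restr mu (cball d o s)) (restr mu (oball d o r)) <= eps%:E)%E.
Proof.
move=> eps0; pose F n := oball d o r `\` cball d o (r - n.+1%:R^-1).
have mcball x c : measurable (cball d x c) by exact/dclosed_measurable/dclosed_cball.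
have moball : measurable (oball d o r) by exact/dopen_measurable/dopen_oball.
have [N muFN] : exists N, (mu (F N) < eps%:E)%E.
  apply: measure_nonincreasing_set0_lt => // [n|n m nm x [ox /negP rx]||].
  - exact: measurableD.
  - split=> //; apply/negP; apply: contra rx => /le_trans; apply.
    by rewrite lerD2l lerN2 le_natSinv.
  - apply: le_lt_trans (cball_finite o r).
    apply: le_measure; rewrite ?inE //; first exact: measurableD.
    by move=> x [ox _]; apply: ltW.
  - apply/seteqP; split=> // x Fx; have [/ltr_add_invr [n rx] _] := Fx 0%N I.
    by have [_] := Fx n I; rewrite /cball /= lerBrDr ltW.
exists N.+1%:R^-1 => // s /andP [rs sr]; rewrite prokhorov_distC.
apply: prokhorov_restr_subset => //; first by move=> x /le_lt_trans; apply.
apply: le_trans (ltW muFN); apply: le_measure; rewrite ?inE; do ?exact: measurableD.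
move=> x [ox /negP sx]; split=> //; apply/negP; apply: contra sx => /le_trans; apply.
exact: ltW.
Qed.

End MeasureOnMetricSpace.

Theorem lemma3p2 (R : realType) (disp : measure_display) (X : measurableType disp)
  (d : X -> X -> R) (o : X) (mu : {measure set X -> \bar R})
  (hd : is_metric d)
  (hBorel : (@measurable disp X) = <<s dopen d >>)
  (hbc : forall (x : X) (r : R),
      dcompact d (cball d x r) /\ (mu (cball d x r) < +oo)%E) :
  (* (i) Hausdorff: right-continuity and left limits *)
  ((forall t : R, 0 <= t -> forall eps : R, 0 < eps ->
      exists2 delta : R, 0 < delta & forall s : R, t <= s < t + delta ->
        (hausdorff_dist d (cball d o s) (cball d o t) <= eps%:E)%E) /\
   (forall r : R, 0 < r -> forall eps : R, 0 < eps ->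
      exists2 delta : R, 0 < delta & forall s : R, 0 <= s -> r - delta < s < r ->
        (hausdorff_dist d (cball d o s) (dclosure d (oball d o r)) <= eps%:E)%E)) /\
  (* (ii) Prokhorov: right-continuity and left limits *)
  ((forall t : R, 0 <= t -> forall eps : R, 0 < eps ->
      exists2 delta : R, 0 < delta & forall s : R, t <= s < t + delta ->
        (prokhorov_dist d (restr mu (cball d o s)) (restr mu (cball d o t)) <= eps%:E)%E) /\
   (forall r : R, 0 < r -> forall eps : R, 0 < eps ->
      exists2 delta : R, 0 < delta & forall s : R, 0 <= s -> r - delta < s < r ->
        (prokhorov_dist d (restr mu (cball d o s)) (restr mu (oball d o r)) <= eps%:E)%E)).
Proof.
have compact x r : dcompact d (cball d x r) by case: (hbc x r).
have finite x r : (mu (cball d x r) < +oo)%E by case: (hbc x r).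
split; split.
- by move=> t _ eps; apply: hausdorff_cball_right.
- move=> r _ eps /(hausdorff_cball_left hd compact o r) [delta delta0 h].
  by exists delta => // s _; apply: h.
- by move=> t _ eps; apply: (prokhorov_cball_right mu hd hBorel compact finite).
- move=> r _ eps /(prokhorov_cball_left mu hd hBorel compact finite o r) [delta delta0 h].
  by exists delta => // s _; apply: h.
Qed.
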